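(* Let $K\ge2$, $\varepsilon>0$ and $\gamma\in\mathcal{P}^\varepsilon(K)$. The function $$V_\gamma(F)=\log\Big(\sum_{k=1}^K\gamma_ke^{F_k}\Big)-\sum_{k=1}^K\gamma_kF_k,\qquad F\in\mathbb{R}^K,$$ is a candidate Lyapunov function for the equilibrium $F^*=0$ (modulo constants): $V_\gamma(F)\ge0$ with equality if and only if $\|F\|_{\mathbb L}=0$, and there exist $\alpha_1,\alpha_2\in\mathcal K_\infty$ such that $\alpha_1(\|F\|_{\mathbb L})\le V_\gamma(F)\le\alpha_2(\|F\|_{\mathbb L})$ for all $F\in\mathbb{R}^K$.
   Context: $\mathcal{P}^\varepsilon(K)$ is the set of probability vectors on $\{1,\dots,K\}$ with entries $\ge\varepsilon$. $\|F\|_{\mathbb L}=\inf_{\alpha\in\mathbb{R}}\|F-\alpha\mathbf 1\|$ (Euclidean norm, $\mathbf 1=(1,\dots,1)$), so $\|F\|_{\mathbb L}=0$ iff all $F_k$ are equal. A function $\alpha:\mathbb{R}_{\ge0}\to\mathbb{R}_{\ge0}$ is of class $\mathcal K_\infty$ if it is continuous, $\alpha(0)=0$, strictly increasing and unbounded. *)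

From HB Require Import structures.
From mathcomp Require Import all_boot all_order all_algebra.
From mathcomp Require Import all_classical all_reals all_analysis.
Set Implicit Arguments. Unset Strict Implicit. Unset Printing Implicit Defensive.
Import Order.TTheory GRing.Theory Num.Theory.
Import numFieldNormedType.Exports.
Local Open Scope ring_scope.
Local Open Scope classical_set_scope.

Definition Peps (R : realType) (K : nat) (eps : R) (g : 'I_K -> R) : Prop :=
  (forall k, eps <= g k) /\ \sum_(k < K) g k = 1.

Definition eucl_norm (R : realType) (K : nat) (F : 'I_K -> R) : R :=
  Num.sqrt (\sum_(k < K) (F k) ^+ 2).

Definition quotLnorm (R : realType) (K : nat) (F : 'I_K -> R) : R :=
  inf [set eucl_norm (fun k => F k - a) | a in [set: R]].

Definition Vgam (R : realType) (K : nat) (g F : 'I_K -> R) : R :=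
  ln (\sum_(k < K) g k * expR (F k)) - \sum_(k < K) g k * F k.

Definition Kinf (R : realType) (a : R -> R) : Prop :=
  [/\ (forall x, 0 <= x -> 0 <= a x),
      {within `[0, +oo[%classic, continuous a},
      a 0 = 0,
      (forall x y, 0 <= x -> x < y -> a x < a y) &
      (forall M, exists x, 0 <= x /\ M < a x)].

(* Let D = max_k F_k - min_k F_k and phi(t) = e^t - 1 - t >= 0, increasing on
   [0, +oo).  Centring F at its gamma-mean c gives
   V_gamma(F) = ln (1 + sum_k gamma_k phi(F_k - c)), and F_max - c >= gamma_min D
   >= eps D, so V_gamma(F) >= ln (1 + eps phi(eps D)); on the other hand
   V_gamma(F) <= F_max - c <= D.  Finally D <= 2 ||F||_L <= 2 sqrt K D, which
   yields alpha_1(x) = ln (1 + eps phi(eps x / sqrt K)) and alpha_2(x) = 2 x. *)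

From HB Require Import structures.
From mathcomp Require Import all_boot all_order all_algebra.
From mathcomp Require Import all_classical all_reals all_analysis.
From mathcomp Require Import ring lra.
Import Order.TTheory GRing.Theory Num.Theory.
Import numFieldNormedType.Exports.
Set Implicit Arguments. Unset Strict Implicit.
Local Open Scope ring_scope.

Section ExpExcess.
Variable R : realType.
Implicit Types a b t x y : R.

Definition expR_excess t : R := expR t - 1 - t.

Lemma expR_excess_ge0 t : 0 <= expR_excess t.
Proof. by rewrite /expR_excess; have := expR_ge1Dx t; lra. Qed.

Lemma expR_excess0 : expR_excess 0 = 0.
Proof. by rewrite /expR_excess expR0; lra. Qed.

(* [e^b - e^a - (b - a) = (e^a - 1)(e^(b-a) - 1) + (e^(b-a) - 1 - (b - a))] *)
Lemma expR_excess_lt a b : 0 <= a -> a < b -> expR_excess a < expR_excess b.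
Proof.
move=> a_ge0 ab; rewrite /expR_excess.
have -> : b = a + (b - a) by ring.
rewrite expRD.
have ea := expR_ge1Dx a.
have eba : 1 + (b - a) < expR (b - a) by apply: expR_gt1Dx; lra.
have : 0 <= (expR a - 1) * (expR (b - a) - 1) by apply: mulr_ge0; lra.
lra.
Qed.

Lemma expR_excess_le a b : 0 <= a -> a <= b -> expR_excess a <= expR_excess b.
Proof.
move=> a_ge0; rewrite le_eqVlt => /predU1P[-> // | ab].
exact/ltW/expR_excess_lt.
Qed.

Lemma expR_excess_ge_sub2 t : 0 <= t -> t - 2 <= expR_excess t.
Proof.
move=> t_ge0; rewrite /expR_excess.
have := expR_ge1Dxn 1 t_ge0; rewrite (_ : (1.+1)`!%:R = 2 :> R) //.
have := sqr_ge0 (t - 2); lra.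
Qed.

Lemma continuous_expR_excess : continuous expR_excess.
Proof.
move=> t; apply: cvgB; last exact: cvg_id.
by apply: cvgB; [exact: continuous_expR | exact: cvg_cst].
Qed.

Definition ln_excess a b x := ln (1 + a * expR_excess (b * x)).

Section LnExcess.
Variables a b : R.
Hypotheses (a_gt0 : 0 < a) (b_gt0 : 0 < b).
Let a_ge0 : 0 <= a := ltW a_gt0.
Let b_ge0 : 0 <= b := ltW b_gt0.

Let one_le_arg x : 1 <= 1 + a * expR_excess (b * x).
Proof. by rewrite lerDl mulr_ge0 ?expR_excess_ge0. Qed.

Lemma ln_excess_ge0 x : 0 <= ln_excess a b x.
Proof. exact/ln_ge0/one_le_arg. Qed.

Lemma ln_excess0 : ln_excess a b 0 = 0.
Proof. by rewrite /ln_excess mulr0 expR_excess0 mulr0 addr0 ln1. Qed.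

Lemma ln_excess_lt x y : 0 <= x -> x < y -> ln_excess a b x < ln_excess a b y.
Proof.
move=> x_ge0 xy; rewrite /ln_excess ltr_ln ?posrE; last 2 first.
- exact: lt_le_trans (one_le_arg x).
- exact: lt_le_trans (one_le_arg y).
rewrite ltrD2l ltr_pM2l // expR_excess_lt ?ltr_pM2l //.
exact: mulr_ge0.
Qed.

Lemma ln_excess_le x y : 0 <= x -> x <= y -> ln_excess a b x <= ln_excess a b y.
Proof.
move=> x_ge0; rewrite le_eqVlt => /predU1P[-> // | xy].
exact/ltW/ln_excess_lt.
Qed.

Lemma continuous_ln_excess : continuous (ln_excess a b).
Proof.
move=> x; apply: continuous_comp; last first.
  by apply: continuous_ln; exact: lt_le_trans (one_le_arg x).
apply: cvgD; first exact: cvg_cst.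
apply: cvgM; first exact: cvg_cst.
apply: continuous_comp; last exact: continuous_expR_excess.
by apply: cvgM; [exact: cvg_cst | exact: cvg_id].
Qed.

(* at [x = (e^M / a + 2) / b] the excess exceeds [e^M / a] *)
Lemma ln_excess_unbounded M : exists x, 0 <= x /\ M < ln_excess a b x.
Proof.
pose t := expR M / a + 2.
have t_ge0 : 0 <= t by rewrite addr_ge0 ?divr_ge0 ?expR_ge0.
exists (t / b); split; first exact: divr_ge0.
have arg_ge1 := one_le_arg (t / b).
have bt : b * (t / b) = t by rewrite mulrCA divff ?gt_eqF // mulr1.
rewrite bt in arg_ge1; rewrite /ln_excess bt -ltr_expR lnK ?posrE; last lra.
have eM : expR M = a * (t - 2) by rewrite /t addrK mulrC divfK ?gt_eqF.
have : a * (t - 2) <= a * expR_excess t.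
  by rewrite ler_pM2l // expR_excess_ge_sub2.
lra.
Qed.

Lemma Kinf_ln_excess : Kinf (ln_excess a b).
Proof.
split.
- by move=> x _; exact: ln_excess_ge0.
- by apply: continuous_subspaceT; exact: continuous_ln_excess.
- exact: ln_excess0.
- exact: ln_excess_lt.
- exact: ln_excess_unbounded.
Qed.

End LnExcess.

Lemma Kinf_scale c : 0 < c -> Kinf (fun x : R => c * x).
Proof.
move=> c_gt0; have c_ge0 := ltW c_gt0; split.
- by move=> x x_ge0; rewrite mulr_ge0.
- apply: continuous_subspaceT => x.
  by apply: cvgM; [exact: cvg_cst | exact: cvg_id].
- by rewrite mulr0.
- by move=> x y _ xy; rewrite ltr_pM2l.
- move=> M; exists ((`|M| + 1) / c); split; first by rewrite divr_ge0 ?addr_ge0.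
  by rewrite mulrC divfK ?gt_eqF //; have := ler_norm M; lra.
Qed.

End ExpExcess.

Section ProbabilityWeights.
Variables (R : realType) (K : nat) (g : 'I_K -> R).
Hypotheses (g_ge0 : forall k, 0 <= g k) (g_sum1 : \sum_(k < K) g k = 1).

Lemma wsum_const a : \sum_(k < K) g k * a = a.
Proof. by rewrite -big_distrl /= g_sum1 mul1r. Qed.

Lemma wsum_ge (f : 'I_K -> R) a : (forall k, a <= f k) -> a <= \sum_(k < K) g k * f k.
Proof.
by move=> af; rewrite -[leLHS]wsum_const; apply: ler_sum => k _; rewrite ler_wpM2l.
Qed.

Lemma wsum_le (f : 'I_K -> R) a : (forall k, f k <= a) -> \sum_(k < K) g k * f k <= a.
Proof.
by move=> fa; rewrite -[leRHS]wsum_const; apply: ler_sum => k _; rewrite ler_wpM2l.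
Qed.

Section Spread.
Variables (F : 'I_K -> R) (i j : 'I_K).
Hypotheses (Fj_min : forall k, F j <= F k) (Fi_max : forall k, F k <= F i).

Let c := \sum_(k < K) g k * F k.

Let excess_sum_ge0 : 0 <= \sum_(k < K) g k * expR_excess (F k - c).
Proof. by apply: sumr_ge0 => k _; rewrite mulr_ge0 ?expR_excess_ge0. Qed.

Lemma Vgam_le_spread : Vgam g F <= F i - F j.
Proof.
have Fj_le_c : F j <= c := wsum_ge Fj_min.
have sum_exp_le : \sum_(k < K) g k * expR (F k) <= expR (F i).
  by apply: wsum_le => k; rewrite ler_expR.
have sum_exp_gt0 : 0 < \sum_(k < K) g k * expR (F k).
  by apply: lt_le_trans (expR_gt0 (F j)) _; apply: wsum_ge => k; rewrite ler_expR.
have : ln (\sum_(k < K) g k * expR (F k)) <= F i.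
  by rewrite -[leRHS]expRK ler_ln ?posrE ?expR_gt0.
rewrite /Vgam -/c; lra.
Qed.

Lemma Vgam_centredE :
  Vgam g F = ln (1 + \sum_(k < K) g k * expR_excess (F k - c)).
Proof.
have sum_shift : \sum_(k < K) g k * (F k - c) = 0.
  by rewrite (eq_bigr _ (fun k _ => mulrBr _ _ _)) sumrB wsum_const subrr.
have sum_shiftE : \sum_(k < K) g k * expR (F k - c) =
                  1 + \sum_(k < K) g k * expR_excess (F k - c).
  rewrite (eq_bigr (fun k => g k + g k * (F k - c) + g k * expR_excess (F k - c))).
    by rewrite !big_split /= g_sum1 sum_shift addr0.
  by move=> k _; rewrite /expR_excess; ring.
have sum_expE : \sum_(k < K) g k * expR (F k) =
                expR c * (1 + \sum_(k < K) g k * expR_excess (F k - c)).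
  rewrite -sum_shiftE big_distrr; apply: eq_bigr => k _ /=.
  by rewrite mulrCA -expRD addrC subrK.
rewrite /Vgam -/c sum_expE lnM ?posrE ?expR_gt0 ?ltr_wpDr // expRK; ring.
Qed.

Lemma ln_excess_le_Vgam (eps : R) : 0 <= eps -> (forall k, eps <= g k) ->
  ln_excess eps eps (F i - F j) <= Vgam g F.
Proof.
move=> eps_ge0 g_ge_eps.
have spread_ge0 : 0 <= F i - F j by rewrite subr_ge0.
have gap_i : eps * (F i - F j) <= F i - c.
  have <- : \sum_(k < K) g k * (F i - F k) = F i - c.
    by rewrite (eq_bigr _ (fun k _ => mulrBr _ _ _)) sumrB wsum_const.
  rewrite (bigD1 j) //= -[leLHS]addr0; apply: lerD.
    by rewrite ler_wpM2r.
  by apply: sumr_ge0 => k _; rewrite mulr_ge0 // subr_ge0.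
have excess_i : eps * expR_excess (eps * (F i - F j)) <= g i * expR_excess (F i - c).
  apply: ler_pM => //; rewrite ?expR_excess_ge0 //.
  by apply: expR_excess_le; rewrite ?mulr_ge0.
rewrite Vgam_centredE /ln_excess ler_ln ?posrE ?ltr_wpDr ?mulr_ge0 ?expR_excess_ge0 //.
rewrite lerD2l (le_trans excess_i) // (bigD1 i) //= lerDl.
by apply: sumr_ge0 => k _; rewrite mulr_ge0 ?expR_excess_ge0.
Qed.

End Spread.
End ProbabilityWeights.

Section KinfSandwich.
Variables (R : realType) (a1 a2 : R -> R).
Hypotheses (a1K : Kinf a1) (a2K : Kinf a2).

Lemma Kinf_sandwich_ge0 (q v : R) : 0 <= q -> a1 q <= v -> 0 <= v.
Proof. by case: a1K => a1_ge0 _ _ _ _ q_ge0; apply/le_trans/a1_ge0. Qed.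

Lemma Kinf_sandwich_eq0 (q v : R) : 0 <= q -> a1 q <= v -> v <= a2 q -> v = 0 <-> q = 0.
Proof.
case: a1K => _ _ a1_0 a1_lt _; case: a2K => _ _ a2_0 _ _ q_ge0 lo up.
split=> [v0 | q0]; last by rewrite q0 a2_0 in up; rewrite q0 a1_0 in lo; apply/le_anti/andP.
apply/eqP; rewrite eq_le q_ge0 andbT leNgt; apply/negP => q_gt0.
by have := a1_lt 0 q (lexx 0) q_gt0; rewrite a1_0 -v0 ltNge lo.
Qed.

End KinfSandwich.

Section QuotientNorm.
Variables (R : realType) (K : nat).
Implicit Types F : 'I_K -> R.
Local Open Scope classical_set_scope.

Lemma eucl_norm_ge_coord F k : `|F k| <= eucl_norm F.
Proof.
rewrite /eucl_norm -sqrtr_sqr ler_sqrt ?sumr_ge0 // => [|l _]; last exact: sqr_ge0.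
by rewrite (bigD1 k) //= lerDl sumr_ge0 // => l _; exact: sqr_ge0.
Qed.

Lemma eucl_norm_le F b : 0 <= b -> (forall k, `|F k| <= b) ->
  eucl_norm F <= Num.sqrt K%:R * b.
Proof.
move=> b_ge0 Fb; rewrite /eucl_norm -(ger0_norm b_ge0) -sqrtr_sqr -sqrtrM ?ler0n //.
rewrite ler_sqrt ?mulr_ge0 ?ler0n ?sqr_ge0 // mulr_natl.
apply: (@le_trans _ _ (\sum_(k < K) b ^+ 2)); last by rewrite sumr_const card_ord.
by apply: ler_sum => k _; rewrite -real_normK ?num_real // lerXn2r ?nnegrE.
Qed.

Let S F := [set eucl_norm (fun k => F k - a) | a in [set: R]].

Let S_lbound F : has_lbound (S F).
Proof. by exists 0 => _ [a _ <-]; exact: sqrtr_ge0. Qed.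

Lemma quotLnorm_le_eucl F a : quotLnorm F <= eucl_norm (fun k => F k - a).
Proof. by apply: ge_inf; [exact: S_lbound | exists a]. Qed.

Lemma le_quotLnorm F b : (forall a, b <= eucl_norm (fun k => F k - a)) -> b <= quotLnorm F.
Proof.
move=> bS; apply: lb_le_inf => [|_ [a _ <-] //].
by exists (eucl_norm (fun k => F k - 0)), 0.
Qed.

Lemma quotLnorm_ge0 F : 0 <= quotLnorm F.
Proof. by apply: le_quotLnorm => a; exact: sqrtr_ge0. Qed.

Lemma spread_le_quotLnorm F i j : F i - F j <= 2 * quotLnorm F.
Proof.
rewrite -ler_pdivrMl // le_quotLnorm // => a.
have /= normi := eucl_norm_ge_coord (fun k => F k - a) i.
have /= normj := eucl_norm_ge_coord (fun k => F k - a) j.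
rewrite distrC in normj.
have := ler_norm (F i - a); have := ler_norm (a - F j); lra.
Qed.

Lemma quotLnorm_le_spread F i j : (forall k, F j <= F k) -> (forall k, F k <= F i) ->
  quotLnorm F <= Num.sqrt K%:R * (F i - F j).
Proof.
move=> Fj_min Fi_max; apply: le_trans (quotLnorm_le_eucl F (F j)) _.
apply: eucl_norm_le => [|k]; first by rewrite subr_ge0.
by rewrite ger0_norm ?subr_ge0 // lerB.
Qed.

Lemma ex_argmin_argmax F : (0 < K)%N ->
  exists i j, (forall k, F j <= F k) /\ (forall k, F k <= F i).
Proof.
move=> K_gt0; pose k0 : 'I_K := Ordinal K_gt0.
case: (@arg_maxP _ _ _ k0 predT F isT) => i _ Fi_max.
case: (@arg_minP _ _ _ k0 predT F isT) => j _ Fj_min.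
by exists i, j; split=> k; [exact: Fj_min | exact: Fi_max].
Qed.

End QuotientNorm.

Lemma Vgam_sandwich (R : realType) (K : nat) (eps : R) (g F : 'I_K -> R) :
  (0 < K)%N -> 0 < eps -> Peps eps g ->
  ln_excess eps (eps / Num.sqrt K%:R) (quotLnorm F) <= Vgam g F <= 2 * quotLnorm F.
Proof.
move=> K_gt0 eps_gt0 [g_ge_eps g_sum1].
have g_ge0 k : 0 <= g k := le_trans (ltW eps_gt0) (g_ge_eps k).
have sqrtK_gt0 : 0 < Num.sqrt K%:R :> R by rewrite sqrtr_gt0 ltr0n.
have [i [j [Fj_min Fi_max]]] := ex_argmin_argmax F K_gt0.
apply/andP; split; last first.
  exact: le_trans (Vgam_le_spread g_ge0 g_sum1 Fj_min Fi_max) (spread_le_quotLnorm F i j).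
apply: le_trans (ln_excess_le_Vgam g_ge0 g_sum1 Fj_min Fi_max (ltW eps_gt0) g_ge_eps).
have -> : ln_excess eps (eps / Num.sqrt K%:R) (quotLnorm F) =
          ln_excess eps eps (quotLnorm F / Num.sqrt K%:R).
  by rewrite /ln_excess mulrAC -mulrA.
apply: ln_excess_le => //; first by rewrite divr_ge0 ?quotLnorm_ge0 ?sqrtr_ge0.
by rewrite ler_pdivrMr // mulrC quotLnorm_le_spread.
Qed.

Theorem lemma2 (R : realType) (K : nat) (eps : R) (g : 'I_K -> R) :
  (2 <= K)%N -> 0 < eps -> Peps eps g ->
  (forall F : 'I_K -> R, 0 <= Vgam g F) /\
  (forall F : 'I_K -> R, Vgam g F = 0 <-> quotLnorm F = 0) /\
  (exists a1 a2 : R -> R, Kinf a1 /\ Kinf a2 /\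
     forall F : 'I_K -> R, a1 (quotLnorm F) <= Vgam g F /\ Vgam g F <= a2 (quotLnorm F)).
Proof.
move=> K_ge2 eps_gt0 gP.
have K_gt0 : (0 < K)%N by exact: leq_trans K_ge2.
pose a1 := ln_excess eps (eps / Num.sqrt K%:R).
pose a2 := fun x : R => 2 * x.
have a1K : Kinf a1 by apply: Kinf_ln_excess; rewrite ?divr_gt0 ?sqrtr_gt0 ?ltr0n.
have a2K : Kinf a2 by exact: Kinf_scale.
have sandwich F : a1 (quotLnorm F) <= Vgam g F /\ Vgam g F <= a2 (quotLnorm F).
  exact/andP/(Vgam_sandwich F K_gt0 eps_gt0 gP).
split=> [F | ]; first by have [lo _] := sandwich F; exact/(Kinf_sandwich_ge0 a1K _ lo)/quotLnorm_ge0.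
split=> [F | ]; last by exists a1, a2.
have [lo up] := sandwich F.
exact/(Kinf_sandwich_eq0 a1K a2K _ lo up)/quotLnorm_ge0.
Qed.
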